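(* Let $G$ be a finite group with a fixed supercharacter theory and let $\iota,\alpha\in\mathrm{scf}(G)$ with $\langle\iota,\alpha\rangle=1$; set $\beta=\alpha$. Then the linear character $\alpha_\bullet\rangle$ of $\mathcal{H}_{(\iota,\alpha,\beta)}$ is odd, i.e. $\mathrm{Res}_{\mathcal{H}_n}(\alpha_\bullet\rangle^{-1})=(-1)^n\,\mathrm{Res}_{\mathcal{H}_n}(\alpha_\bullet\rangle)$ for every $n$, where $\mathcal{H}_n=\mathrm{scf}(G^{n-1})$ is the degree-$n$ component.
   Context: Supercharacter theory: set partition $\mathtt{Cl}$ of $G$ and pairwise orthogonal characters $\mathtt{Ch}$ forming a basis of $\mathrm{scf}(G)=\{\psi:G\to\mathbb{C}$ constant on blocks of $\mathtt{Cl}\}$, with $\mathbf{reg}\in\mathrm{scf}(G)$, $\mathbb{1}\in\mathtt{Ch}$; $\langle\psi,\gamma\rangle=|G|^{-1}\sum_g\psi(g)\overline{\gamma(g)}$. For $n\ge1$, $G^{n-1}=G\times\cdots\times G\times\{1\}$ ($n-1$ copies of $G$), $\mathrm{scf}(G^{n-1})$ is spanned by $\psi_1\otimes\cdots\otimes\psi_{n-1}\otimes\chi^{()}:(g_1,\dots,g_{n-1},1)\mapsto\prod\psi_j(g_j)$ ($\chi^{()}$ trivial character of the trivial group), with the usual inner product of $G^{n-1}$; $\mathrm{scf}(G^{-1}):=\mathbb{C}\chi^\emptyset$, $\langle\chi^\emptyset,\chi^\emptyset\rangle=1$. $\mathcal{H}_{(\iota,\alpha,\beta)}=\bigoplus_{n\ge0}\mathrm{scf}(G^{n-1})$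 is the graded connected Hopf algebra with unit $\chi^\emptyset$, product $(\gamma_1\otimes\cdots\otimes\gamma_{m-1}\otimes\chi^{()})\cdot(\psi_1\otimes\cdots\otimes\psi_{n-1}\otimes\chi^{()})=\gamma_1\otimes\cdots\otimes\gamma_{m-1}\otimes\iota\otimes\psi_1\otimes\cdots\otimes\psi_{n-1}\otimes\chi^{()}$, coproduct $\Delta(\psi)=\sum_{A\subseteq[n]}\psi^{A}\otimes\psi^{[n]\setminus A}$ for $\psi=\psi_1\otimes\cdots\otimes\psi_{n-1}\otimes\chi^{()}$, where $\psi^\emptyset=\chi^\emptyset$; for nonempty $A=\{a_1<\dots<a_k\}$, $\psi^{A}=\lambda_A\,x_{a_1}\otimes\cdots\otimes x_{a_{k-1}}\otimes\chi^{()}$ with $x_{a_i}=\psi_{a_i}$ if $a_{i+1}=a_i+1$, else $\langle\psi_{a_i},\alpha\rangle\iota$, and $\lambda_A=\langle\psi_{a_k},\alpha\rangle$ if $a_k<n$, $1$ if $a_k=n$; $\psi^{[n]\setminus A}$ is the same with $\beta$ in place of $\alpha$; counit = projection to degree 0. $\alpha_\bullet\rangle:\mathcal{H}\to\mathbb{C}$ is the linear map $\gamma\mapsto\langle\gamma,\alpha_n\rangle$ on degree $n$, where $\alpha_n=\alpha^{\otimes(n-1)}\otimes\chi^{()}$ and $\alpha_0=\chi^\emptyset$; it is an algebra homomorphism (linear character), and the inverse is taken in the group of linear characters under convolution $\zeta\circ\xi=m_{\mathbb{C}}(\zeta\otimes\xi)\Delta$. *)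

From HB Require Import structures.
From mathcomp Require Import all_boot all_order all_algebra all_fingroup all_field all_character.
Unset Printing Implicit Defensive.
Import GRing.Theory Num.Theory.
Local Open Scope ring_scope.

Section Defs.
Variable gT : finGroupType.

Definition blockconst (Cl : {set {set gT}}) (f : gT -> algC) : Prop :=
  forall x y, pblock Cl x = pblock Cl y -> f x = f y.

Definition supercharacter_theory (Cl : {set {set gT}}) (Ch : seq 'CF([set: gT])) : Prop :=
  [/\ partition Cl [set: gT],
      all (fun chi => chi \is a character) Ch /\ pairwise_orthogonal Ch,
      (forall chi, chi \in Ch -> blockconst Cl (fun x => chi x)),
      (forall f : gT -> algC, blockconst Cl f ->
          (exists2 phi, phi \in <<Ch>>%VS & forall x, phi x = f x))
    & blockconst Cl (fun x => cfReg [set: gT] x) /\ 1 \in Ch].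

Definition tup (m : nat) := {ffun 'I_m -> gT}.

(* degree-n component: functions on G^{n-1} (G^{-1} := G^0, one-dimensional) *)
Definition Hdeg (n : nat) := tup n.-1 -> algC.

Definition scf_prod (Cl : {set {set gT}}) (n : nat) (f : Hdeg n) : Prop :=
  forall g g' : tup n.-1, (forall j, pblock Cl (g j) = pblock Cl (g' j)) -> f g = f g'.

(* linear functionals on H, given degreewise *)
Definition lfun := forall n : nat, Hdeg n -> algC.

(* alpha_. > : f in degree n |-> < f, alpha^{(x) n-1} (x) chi^() > *)
Definition inner_alpha (alpha : 'CF([set: gT])) : lfun := fun n f =>
  (#|gT|%:R ^- (n.-1)) * \sum_(g : tup n.-1) f g * (\prod_(j < n.-1) alpha (g j))^*.

Definition tget (m : nat) (h : tup m) (s : nat) : gT :=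
  if insub s is Some i then h i else 1%g.

(* 0-based positions: position p in 'I_n stands for index p+1 of [n] *)
Definition memn (n : nat) (S : {set 'I_n}) (m : nat) : bool :=
  [exists a in S, nat_of_ord a == m].
Definition rankn (n : nat) (S : {set 'I_n}) (m : nat) : nat :=
  #|[set a in S | (nat_of_ord a < m)%N]|.
Arguments memn {n} S m.
Arguments rankn {n} S m.
Arguments tget {m} h s.

(* kernel of psi |-> psi^S on the coordinate j (0-based), gam = alpha or beta *)
Definition kern (iota gam : 'CF([set: gT])) (n : nat) (S : {set 'I_n})
    (j : nat) (x : gT) (h : tup #|S|.-1) : algC :=
  if memn S j then
    if memn S j.+1 then (x == tget h (rankn S j))%:R
    else (gam x)^* / #|gT|%:R *
         (if [exists a in S, (j < nat_of_ord a)%N] then iota (tget h (rankn S j)) else 1)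
  else 1.
Arguments kern iota gam {n} S j x h.

(* the A-summand psi^A (x) psi^{[n]\A} of Delta(f), as a function on G^{|A|-1} x G^{n-|A|-1},
   i.e. the multilinear extension of the defining formula on pure tensors *)
Definition coprod_term (iota alpha beta : 'CF([set: gT])) (n : nat) (A : {set 'I_n})
    (f : Hdeg n) (h : tup #|A|.-1) (h' : tup #|~: A|.-1) : algC :=
  \sum_(g : tup n.-1) f g *
     \prod_(j < n.-1) (kern iota alpha A j (g j) h * kern iota beta (~: A) j (g j) h').
Arguments coprod_term iota alpha beta {n} A f h h'.

(* convolution  z o x = m (z (x) x) Delta *)
Definition conv (iota alpha beta : 'CF([set: gT])) (z x : lfun) : lfun := fun n f =>
  \sum_(A : {set 'I_n})
     z #|A| (fun h => x #|~: A| (fun h' => coprod_term iota alpha beta A f h h')).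

Definition counit : lfun := fun n f => (n == 0%N)%:R * f [ffun => 1%g].

Definition sign_twist (z : lfun) : lfun := fun n f => (-1) ^+ n * z n f.

End Defs.
Arguments blockconst {gT} Cl f.
Arguments supercharacter_theory {gT} Cl Ch.
Arguments scf_prod {gT} Cl {n} f.
Arguments inner_alpha {gT} alpha n f.
Arguments conv {gT} iota alpha beta z x n f.
Arguments counit {gT} n f.
Arguments sign_twist {gT} z n f.

(* With beta = alpha and <iota, alpha> = 1 the functional alpha_.> is multiplicative along the
   coproduct: for every A, alpha_.>(psi^A) * alpha_.>(psi^([n] \ A)) = alpha_.>(psi).  Indeed, on a
   pure tensor psi_1 (x) ... (x) psi_(n-1), each factor <psi_j, alpha> (j < n) lands on exactly one
   side, and replacing psi_j by <psi_j, alpha> iota does not change the pairing with alpha.  Hence,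
   in degree n, both convolutions of alpha_.> with its sign twist evaluate to
   (sum_A (-1)^|A|) alpha_.>(psi) = [n = 0] alpha_.>(psi), the counit.  The identity holds for all
   functions on G^(n-1).  For a general
   function it is checked on point masses, where rank in S identifies the non-maximal elements of
   S with the coordinates of G^(|S|-1) and the sum over G^(|S|-1) factors. *)

From HB Require Import structures.
From mathcomp Require Import all_boot all_order all_algebra all_fingroup all_field all_character.
From mathcomp Require Import zify.
Import GRing.Theory Num.Theory.
Local Open Scope ring_scope.
Set Implicit Arguments.
Unset Strict Implicit.

#[local] Arguments memn {n} S m.
#[local] Arguments rankn {n} S m.
#[local] Arguments tget {gT m} h s.
#[local] Arguments kern {gT} iota gam {n} S j x h.
#[local] Arguments coprod_term {gT} iota alpha beta {n} A f h h'.

Lemma sum_subsets_sign (R : pzRingType) (T : finType) :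
  \sum_(A : {set T}) (-1) ^+ #|A| = (#|T| == 0)%N%:R :> R.
Proof.
transitivity (\prod_(i : T) (-1 + 1) : R); last by rewrite addNr prodr_const expr0n.
rewrite bigA_distr; apply: eq_bigr => A _.
by rewrite -big_mkcond prodr_const.
Qed.

Section NatBijection.
Variables (I : finType) (P : pred I) (rho : I -> nat) (m : nat).
Hypotheses (rho_inj : {in P &, injective rho}) (rho_lt : forall j, P j -> (rho j < m)%N)
  (rho_onto : forall r, (r < m)%N -> exists2 j, P j & rho j = r).

Lemma reindex_nat_bij : exists sig : 'I_m -> I,
  (forall r, P (sig r) /\ rho (sig r) = r) /\
  forall (R : Type) (idx : R) (op : Monoid.com_law idx) (F : I -> R),
    \big[op/idx]_(j | P j) F j = \big[op/idx]_(r < m) F (sig r).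
Proof.
have /fin_all_exists[sig sigP] (r : 'I_m) : exists j, P j /\ rho j = r.
  by have [j Pj <-] := rho_onto (ltn_ord r); exists j.
have sig_inj : injective sig by move=> r r' /(congr1 rho); rewrite !(sigP _).2 => /val_inj.
exists sig; split=> // R idx op F.
rewrite -[RHS](big_imset _ (in2W sig_inj)) /=; apply: eq_bigl => j.
apply/idP/imsetP => [Pj | [r _ ->]]; last by case: (sigP r).
exists (Ordinal (rho_lt Pj)) => //; have [Psig rho_sig] := sigP (Ordinal (rho_lt Pj)).
by apply: rho_inj; rewrite ?unfold_in ?rho_sig.
Qed.

Lemma card_nat_bij : #|P| = m.
Proof.
have [sig [_ reindexP]] := reindex_nat_bij.
by rewrite -sum1_card (reindexP _ _ addn) sum1_card card_ord.
Qed.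

Lemma sum_tup_prod_nat_bij (gT : finGroupType) (R : comPzSemiRingType)
    (c : gT -> R) (F : I -> gT -> R) :
  \sum_(h : tup gT m) (\prod_(r < m) c (h r)) * \prod_(j | P j) F j (tget h (rho j))
    = \prod_(j | P j) \sum_x c x * F j x.
Proof.
have [sig [sigP reindexP]] := reindex_nat_bij.
rewrite reindexP bigA_distr_bigA; apply: eq_bigr => h _.
rewrite reindexP -big_split; apply: eq_bigr => r _ /=.
by rewrite (sigP r).2 /tget valK.
Qed.

End NatBijection.

Section Rank.
Variables (n : nat) (S : {set 'I_n}).

Lemma memnP j : reflect (exists2 a : 'I_n, a \in S & nat_of_ord a = j) (memn S j).
Proof.
apply: (iffP existsP) => [[a /andP[aS /eqP ej]] | [a aS ej]]; first by exists a.
by exists a; rewrite aS ej /=.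
Qed.

Lemma memnC j : (j < n)%N -> memn (~: S) j = ~~ memn S j.
Proof.
move=> lt_jn; have memnE (T : {set 'I_n}) : memn T j = (Ordinal lt_jn \in T).
  apply/existsP/idP => [[a /andP[aT /eqP ej]] | jT]; last by exists (Ordinal lt_jn); rewrite jT /=.
  by rewrite (_ : Ordinal lt_jn = a) //; apply: val_inj.
by rewrite !memnE inE.
Qed.

Lemma rankn_lt (a : 'I_n) j : a \in S -> (a < j)%N -> (rankn S a < rankn S j)%N.
Proof.
move=> aS lt_aj; apply: proper_card; apply/properP; split.
  by apply/subsetP => b; rewrite !inE => /andP[-> lt_ba]; apply: ltn_trans lt_ba lt_aj.
by exists a; rewrite !inE ?aS ?lt_aj ?ltnn.
Qed.

Lemma rankn_lt_card (a : 'I_n) : a \in S -> (rankn S a < #|S|)%N.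
Proof.
move=> aS; apply: proper_card; apply/properP; split.
  by apply/subsetP => b; rewrite inE => /andP[].
by exists a; rewrite // inE ltnn andbF.
Qed.

Lemma rankn_inj : {in S &, injective (fun a : 'I_n => rankn S a)}.
Proof.
move=> a b aS bS eq_ab; case: (ltngtP a b) => [lt_ab | lt_ba | /val_inj //].
  by have := rankn_lt aS lt_ab; rewrite eq_ab ltnn.
by have := rankn_lt bS lt_ba; rewrite eq_ab ltnn.
Qed.

Lemma rankn_onto r : (r < #|S|)%N -> exists2 a : 'I_n, a \in S & rankn S a = r.
Proof.
move=> lt_rS.
have [_ eq_ranks] : (size [seq rankn S (val a) | a <- enum S] = size (iota 0 #|S|))
    * ([seq rankn S (val a) | a <- enum S] =i iota 0 #|S|).
  apply: uniq_min_size.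
  - by rewrite map_inj_in_uniq ?enum_uniq // => a b; rewrite !mem_enum; apply: rankn_inj.
  - by move=> x /mapP[a]; rewrite mem_enum mem_iota => aS ->; rewrite rankn_lt_card.
  - by rewrite size_map size_iota -cardE.
have /mapP[a] : r \in [seq rankn S (val a) | a <- enum S] by rewrite eq_ranks mem_iota.
by rewrite mem_enum => aS ->; exists a.
Qed.

Definition nonmaxn (j : 'I_n.-1) : bool := memn S j && [exists a in S, (j < a)%N].

Lemma rankn_nonmax_inj : {in nonmaxn &, injective (fun j : 'I_n.-1 => rankn S j)}.
Proof.
move=> j k /andP[/memnP[a aS ej] _] /andP[/memnP[b bS ek] _].
rewrite -ej -ek => /(rankn_inj aS bS) eq_ab; apply: val_inj.
by rewrite /= -ej -ek eq_ab.
Qed.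

Lemma rankn_nonmax_lt j : nonmaxn j -> (rankn S j < #|S|.-1)%N.
Proof.
case/andP => /memnP[a aS <-] /existsP[b /andP[bS lt_ab]].
by have := rankn_lt aS lt_ab; have := rankn_lt_card bS; lia.
Qed.

Lemma rankn_nonmax_onto r :
  (r < #|S|.-1)%N -> exists2 j, nonmaxn j & rankn S j = r.
Proof.
move=> lt_rS.
have [a aS ra] : exists2 a : 'I_n, a \in S & rankn S a = r by apply: rankn_onto; lia.
have [b bS rb] : exists2 b : 'I_n, b \in S & rankn S b = r.+1 by apply: rankn_onto; lia.
have lt_ab : (a < b)%N.
  case: ltngtP => // [lt_ba | /val_inj eq_ab]; last by move: rb; rewrite -eq_ab ra; lia.
  by have := rankn_lt bS lt_ba; lia.
have lt_a : (a < n.-1)%N by have := ltn_ord b; lia.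
exists (Ordinal lt_a) => //; apply/andP; split; first by apply/memnP; exists a.
by apply/existsP; exists b; rewrite bS.
Qed.

End Rank.

Section InnerAlpha.
Variables (gT : finGroupType) (iota alpha : 'CF([set: gT])).
Local Notation N := (#|gT|%:R : algC).

Lemma natr_card_neq0 : N != 0.
Proof. by rewrite -cardsT neq0CG. Qed.

Lemma eq_inner_alpha m (f f' : Hdeg gT m) :
  f =1 f' -> inner_alpha alpha m f = inner_alpha alpha m f'.
Proof. by move=> eq_f; rewrite /inner_alpha; under eq_bigr do rewrite eq_f. Qed.

Lemma inner_alphaZ m c (f : Hdeg gT m) :
  inner_alpha alpha m (fun g => c * f g) = c * inner_alpha alpha m f.
Proof.
rewrite /inner_alpha [RHS]mulrCA [in RHS]mulr_sumr; congr (_ * _).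
by apply: eq_bigr => g _; rewrite mulrA.
Qed.

Lemma inner_alpha_sum (I : finType) m (c : I -> algC) (F : I -> Hdeg gT m) :
  inner_alpha alpha m (fun g => \sum_i c i * F i g) = \sum_i c i * inner_alpha alpha m (F i).
Proof.
rewrite /inner_alpha; under eq_bigr do rewrite mulr_suml.
rewrite exchange_big mulr_sumr; apply: eq_bigr => i _.
by rewrite [RHS]mulrCA [in RHS]mulr_sumr; congr (_ * _); apply: eq_bigr => g _; rewrite mulrA.
Qed.

Lemma counitE n (f : Hdeg gT n) : counit n f = (n == 0)%:R * inner_alpha alpha n f.
Proof.
case: n f => [|n] f; last by rewrite /counit !mul0r.
rewrite /counit /inner_alpha /= expr0 invr1 !mul1r (big_pred1 [ffun => 1%g]).
  by rewrite big_ord0 rmorph1 mulr1.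
by move=> g; apply/esym/eqP/ffunP => -[].
Qed.

Definition cut_factor n (S : {set 'I_n}) (j : nat) (x : gT) : algC :=
  if memn S j then (alpha x)^* / N else 1.

Definition kern_nonmax n (S : {set 'I_n}) (j : nat) (x y : gT) : algC :=
  if memn S j.+1 then (x == y)%:R else (alpha x)^* / N * iota y.

Lemma cut_factorC n (A : {set 'I_n}) (j : 'I_n.-1) x :
  cut_factor (~: A) j x * cut_factor A j x = (alpha x)^* / N.
Proof.
have lt_jn : (j < n)%N by apply: leq_trans (ltn_ord j) (leq_pred n).
by rewrite /cut_factor memnC //; case: (memn A j); rewrite ?mulr1 ?mul1r.
Qed.

Lemma kernE_nonmax n (S : {set 'I_n}) (j : 'I_n.-1) x h :
  nonmaxn S j -> kern iota alpha S j x h = kern_nonmax S j x (tget h (rankn S j)).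
Proof. by rewrite /kern => /andP[-> ->]. Qed.

Lemma kernE_max n (S : {set 'I_n}) (j : 'I_n.-1) x h :
  ~~ nonmaxn S j -> kern iota alpha S j x h = cut_factor S j x.
Proof.
rewrite /kern /cut_factor /nonmaxn; case: (boolP (memn S j)) => //= Sj no_succ.
rewrite (negbTE no_succ) mulr1; case: (boolP (memn S j.+1)) => // /memnP[a aS ej].
by case/negP: no_succ; apply/existsP; exists a; rewrite aS ej ltnSn.
Qed.

Hypothesis iota_alpha : '[iota, alpha] = 1.

Lemma sum_iota_alpha : \sum_x iota x * (alpha x)^* = N.
Proof.
move: iota_alpha; rewrite cfdotE cardsT => /(congr1 ( *%R N)).
rewrite mulr1 mulVKf ?natr_card_neq0 // => <-.
by apply: eq_bigl => x; rewrite inE.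
Qed.

(* By [<iota, alpha> = 1], replacing a factor [psi_j] by [<psi_j, alpha> iota] does not change
   the pairing with alpha. *)
Lemma sum_kern_nonmax n (S : {set 'I_n}) j x :
  \sum_y (alpha y)^* * kern_nonmax S j x y = (alpha x)^*.
Proof.
rewrite /kern_nonmax; case: (memn S j.+1).
  rewrite (bigD1 x) //= eqxx mulr1 big1 ?addr0 // => y /negbTE.
  by rewrite eq_sym => ->; rewrite mulr0.
transitivity ((alpha x)^* / N * \sum_y iota y * (alpha y)^*).
  by rewrite mulr_sumr; apply: eq_bigr => y _; rewrite mulrCA [iota y * _]mulrC.
by rewrite sum_iota_alpha divfK ?natr_card_neq0.
Qed.

(* [cut_delta S g] is [(delta_g)^S], the [S]-part of the coproduct of the point mass at [g]. *)
Definition cut_delta n (S : {set 'I_n}) (g : tup gT n.-1) : Hdeg gT #|S| :=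
  fun h => \prod_(j < n.-1) kern iota alpha S j (g j) h.
Arguments cut_delta {n} S g.

Lemma coprod_termE n (A : {set 'I_n}) (f : Hdeg gT n) h h' :
  coprod_term iota alpha alpha A f h h' = \sum_g f g * cut_delta A g h * cut_delta (~: A) g h'.
Proof. by apply: eq_bigr => g _; rewrite big_split mulrA. Qed.

Lemma inner_alpha_cut_delta n (S : {set 'I_n}) (g : tup gT n.-1) :
  inner_alpha alpha #|S| (cut_delta S g) = \prod_(j < n.-1) cut_factor S j (g j).
Proof.
have rank_inj := rankn_nonmax_inj (S := S).
have rank_lt := rankn_nonmax_lt (S := S); have rank_onto := rankn_nonmax_onto (S := S).
rewrite /inner_alpha /cut_delta.
transitivity (N ^- #|S|.-1 * ((\sum_(h : tup gT #|S|.-1) (\prod_(r < #|S|.-1) (alpha (h r))^*) *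
     \prod_(j | nonmaxn S j) kern_nonmax S j (g j) (tget h (rankn S j))) *
   \prod_(j | ~~ nonmaxn S j) cut_factor S j (g j))).
  rewrite mulr_suml; congr (_ * _); apply: eq_bigr => h _.
  rewrite (bigID (nonmaxn S)) /= rmorph_prod mulrC mulrA.
  congr (_ * _ * _); apply: eq_bigr => j Sj.
  - exact: kernE_nonmax.
  - exact: kernE_max.
have reindexE := sum_tup_prod_nat_bij rank_inj rank_lt rank_onto (fun y => (alpha y)^*)
  (fun j => kern_nonmax S j (g j)).
cbv beta in reindexE; rewrite reindexE.
under eq_bigr do rewrite sum_kern_nonmax.
rewrite [RHS](bigID (nonmaxn S)) /= mulrA; congr (_ * _).
rewrite -(card_nat_bij rank_inj rank_lt rank_onto) -prodr_const mulrC -prodf_div.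
by apply: eq_bigr => j /andP[Sj _]; rewrite /cut_factor Sj.
Qed.

Lemma inner_alpha_coprod n (A : {set 'I_n}) (f : Hdeg gT n) :
  inner_alpha alpha #|A|
      (fun h => inner_alpha alpha #|~: A| (fun h' => coprod_term iota alpha alpha A f h h'))
    = inner_alpha alpha n f.
Proof.
have inner_compl h : inner_alpha alpha #|~: A| (fun h' => coprod_term iota alpha alpha A f h h')
    = \sum_g (f g * \prod_(j < n.-1) cut_factor (~: A) j (g j)) * cut_delta A g h.
  rewrite (eq_inner_alpha (@coprod_termE n A f h)) inner_alpha_sum.
  by apply: eq_bigr => g _; rewrite (inner_alpha_cut_delta (~: A) g) mulrAC.
rewrite (eq_inner_alpha inner_compl) inner_alpha_sum.
under eq_bigr => g _ do rewrite (inner_alpha_cut_delta A g).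
rewrite /inner_alpha mulr_sumr; apply: eq_bigr => g _; rewrite -mulrA -big_split /=.
under eq_bigr do rewrite cut_factorC.
by rewrite prodf_div prodr_const card_ord rmorph_prod mulrA mulrC.
Qed.

End InnerAlpha.

Theorem mainTheorem8 (gT : finGroupType) (Cl : {set {set gT}}) (Ch : seq 'CF([set: gT]))
    (iota alpha : 'CF([set: gT])) :
  supercharacter_theory Cl Ch ->
  blockconst Cl (fun x => iota x) -> blockconst Cl (fun x => alpha x) ->
  '[iota, alpha] = 1 ->
  let beta := alpha in
  forall (n : nat) (f : Hdeg gT n), scf_prod Cl f ->
    conv iota alpha beta (sign_twist (inner_alpha alpha)) (inner_alpha alpha) n f = counit n f /\
    conv iota alpha beta (inner_alpha alpha) (sign_twist (inner_alpha alpha)) n f = counit n f.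
Proof.
move=> _ _ _ iota_alpha beta n f _; rewrite /conv /sign_twist (counitE alpha); split.
- under eq_bigr do rewrite (inner_alpha_coprod iota_alpha).
  by rewrite -mulr_suml sum_subsets_sign card_ord.
- under eq_bigr do rewrite inner_alphaZ (inner_alpha_coprod iota_alpha).
  rewrite -mulr_suml (reindex_inj (@setC_inj _)) /=.
  by under eq_bigr do rewrite setCK; rewrite sum_subsets_sign card_ord.
Qed.
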